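(* The tag–options lattice $TO$ (defined below) is a complete lattice.
   Context: $T$ is a set of tags and $O$ a set of options. The tag lattice is the dual of the powerset lattice of $T$: its elements are subsets of $T$, ordered by $A \sqsubseteq B$ iff $A \supseteq B$, with meet given by union and join by intersection. For $T' \subseteq T$, the options lattice $O_{T'}$ consists of all functions $f : T' \to \mathcal{P}(O)$, ordered pointwise by inclusion, with meet the pointwise intersection and join the pointwise union. For $A,B \subseteq T$, define $\phi_{A\to B} : O_A \to O_B$ by $\phi_{A\to B}(f)(t) = f(t)$ if $t\in A\cap B$ and $=O$ if $t\in B\setminus A$. The tag–options lattice $TO$ has elements the pairs $(T', f)$ with $T' \subseteq T$ and $f \in O_{T'}$, ordered by $(A,f) \sqsubseteq (B,g)$ iff $A \supseteq B$ and $\phi_{A\to B}(f) \sqsubseteq g$ in $O_B$. For $\Lambda \subseteq TO$ with $V = \{T' \mid (T',f)\in\Lambda\}$, the join is $(\bigcap V, \bigvee\{\phi_{T'\to \bigcap V}(f) \mid (T',f)\in\Lambda\})$ and the meet is $(\bigcup V, \bigwedge\{\phi_{T'\to\bigcup V}(f) \mid (T',f)\in\Lambda\})$, where $\bigvee,\bigwedge$ denote join and meet in the corresponding options lattice. *)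

Set Implicit Arguments.

Definition pset (X : Type) := X -> Prop.

Definition opts (T O : Type) (A : pset T) := {t : T | A t} -> pset O.

Definition opts_le (T O : Type) (A : pset T) (f g : opts O A) : Prop :=
  forall (t : {t : T | A t}) (o : O), f t o -> g t o.

(* phi_{A -> B}(f)(t) = f(t) if t in A /\ B, and = O if t in B \ A.
   Written as: o ∈ phi(f)(t)  iff  (for every proof that t ∈ A, o ∈ f(t)). *)
Definition phi (T O : Type) (A B : pset T) (f : opts O A) : opts O B :=
  fun tB o => forall hA : A (proj1_sig tB), f (exist _ (proj1_sig tB) hA) o.

Record TO (T O : Type) := mkTO { tags : pset T; topts : opts O tags }.

Definition TO_le (T O : Type) (x y : TO T O) : Prop :=
  (forall t, tags y t -> tags x t) /\
  opts_le (phi (tags y) (topts x)) (topts y).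

Definition is_upper_bound (X : Type) (le : X -> X -> Prop) (L : pset X) (s : X) :=
  forall x, L x -> le x s.
Definition is_lower_bound (X : Type) (le : X -> X -> Prop) (L : pset X) (s : X) :=
  forall x, L x -> le s x.

Definition is_complete_lattice (X : Type) (le : X -> X -> Prop) : Prop :=
  (forall x, le x x) /\
  (forall x y, le x y -> le y x -> x = y) /\
  (forall x y z, le x y -> le y z -> le x z) /\
  (forall L : pset X,
     (exists s, is_upper_bound le L s /\
                forall u, is_upper_bound le L u -> le s u) /\
     (exists i, is_lower_bound le L i /\
                forall l, is_lower_bound le L l -> le l i)).

(** Extending an option function [f] on [A] by the full option set outside [A]
    turns an element [(A, f)] of [TO] into a pair of [A] and a function
    [T -> P(O)] that is full off [A]; in these terms [x ⊑ y] is reverse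
    inclusion of tags together with pointwise inclusion of the extensions.
    Joins and meets are therefore computed componentwise (intersection/union of
    the tags, union/intersection of the extensions), and the fullness
    constraint off the tags is preserved by both. *)

From Stdlib Require Import FunctionalExtensionality PropExtensionality ProofIrrelevance.

Section TagOptions.

Variables T O : Type.

Definition opts_ext {A : pset T} (f : opts O A) (t : T) : pset O :=
  fun o => forall h : A t, f (exist _ t h) o.

Lemma opts_ext_inj {A : pset T} (f g : opts O A) :
  (forall t o, opts_ext f t o -> opts_ext g t o) ->
  (forall t o, opts_ext g t o -> opts_ext f t o) -> f = g.
Proof.
  intros Hfg Hgf.
  apply functional_extensionality; intros [t h].
  apply functional_extensionality; intro o.
  apply propositional_extensionality; split; intro K.
  - apply (Hfg t o); intro h'; rewrite (proof_irrelevance _ h' h); exact K.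
  - apply (Hgf t o); intro h'; rewrite (proof_irrelevance _ h' h); exact K.
Qed.

Lemma TO_leP (x y : TO T O) :
  TO_le x y <->
  (forall t, tags y t -> tags x t) /\
  (forall t o, opts_ext (topts x) t o -> opts_ext (topts y) t o).
Proof.
  split; intros [Htags Hopts]; split; trivial.
  - intros t o K h; exact (Hopts (exist _ t h) o K).
  - intros [t h] o K; exact (Hopts t o K h).
Qed.

Lemma TO_le_opts_ext {x y : TO T O} :
  TO_le x y -> forall t o, opts_ext (topts x) t o -> opts_ext (topts y) t o.
Proof. intro Hxy; exact (proj2 (proj1 (TO_leP x y) Hxy)). Qed.

Lemma TO_le_refl (x : TO T O) : TO_le x x.
Proof. apply TO_leP; split; auto. Qed.

Lemma TO_le_trans (x y z : TO T O) : TO_le x y -> TO_le y z -> TO_le x z.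
Proof.
  rewrite !TO_leP; intros [Hxy Kxy] [Hyz Kyz]; split; auto.
Qed.

Lemma TO_le_antisym (x y : TO T O) : TO_le x y -> TO_le y x -> x = y.
Proof.
  destruct x as [A f], y as [B g]; rewrite !TO_leP; simpl.
  intros [HBA Kfg] [HAB Kgf].
  assert (EAB : A = B).
  { apply functional_extensionality; intro t.
    apply propositional_extensionality; split; auto. }
  subst B; f_equal; exact (opts_ext_inj f g Kfg Kgf).
Qed.

Definition TO_join (L : pset (TO T O)) : TO T O :=
  @mkTO T O (fun t => forall x, L x -> tags x t)
    (fun th o => exists x, L x /\ opts_ext (topts x) (proj1_sig th) o).

Definition TO_meet (L : pset (TO T O)) : TO T O :=
  @mkTO T O (fun t => exists x, L x /\ tags x t)
    (fun th o => forall x, L x -> opts_ext (topts x) (proj1_sig th) o).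

Lemma TO_join_ub (L : pset (TO T O)) : is_upper_bound (@TO_le T O) L (TO_join L).
Proof.
  intros x Lx; apply TO_leP; split; simpl; auto.
  intros t o K h; exists x; auto.
Qed.

Lemma TO_join_least (L : pset (TO T O)) (u : TO T O) :
  is_upper_bound (@TO_le T O) L u -> TO_le (TO_join L) u.
Proof.
  intro Hu; apply TO_leP; split; simpl.
  - intros t ht x Lx; exact (proj1 (Hu x Lx) t ht).
  - intros t o K hu.
    assert (ht : forall x, L x -> tags x t)
      by (intros x Lx; exact (proj1 (Hu x Lx) t hu)).
    destruct (K ht) as [x [Lx Kx]].
    exact (TO_le_opts_ext (Hu x Lx) t o Kx hu).
Qed.

Lemma TO_meet_lb (L : pset (TO T O)) : is_lower_bound (@TO_le T O) L (TO_meet L).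
Proof.
  intros x Lx; apply TO_leP; split; simpl.
  - intros t ht; exists x; auto.
  - intros t o K h; exact (K (ex_intro _ x (conj Lx h)) x Lx h).
Qed.

Lemma TO_meet_greatest (L : pset (TO T O)) (l : TO T O) :
  is_lower_bound (@TO_le T O) L l -> TO_le l (TO_meet L).
Proof.
  intro Hl; apply TO_leP; split; simpl.
  - intros t [x [Lx hx]]; exact (proj1 (Hl x Lx) t hx).
  - intros t o K hm x Lx; exact (TO_le_opts_ext (Hl x Lx) t o K).
Qed.

End TagOptions.

Theorem theorem6 (T O : Type) : is_complete_lattice (@TO_le T O).
Proof.
  split; [exact (@TO_le_refl T O) |].
  split; [exact (@TO_le_antisym T O) |].
  split; [exact (@TO_le_trans T O) |].
  intro L; split.
  - exists (@TO_join T O L); split; [apply TO_join_ub | apply TO_join_least].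
  - exists (@TO_meet T O L); split; [apply TO_meet_lb | apply TO_meet_greatest].
Qed.
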